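(* Let $N\ge1$ and $b\ge1$ be integers, let $\Delta\ge 1$ and $K\ge 1$ be reals, and suppose $b\le\log_2(N/(K\Delta))$. Then there is a set $\mathcal{Y}\subset(\{0,1\}^b)^N$ of entropy deficiency at most $\Delta$ and min-entropy rate more than $1-1/b$ such that for every $I\subseteq[N]$ with $|I|\le (K-1)\Delta$, the set $\mathrm{IP}_b^{[N]\setminus I}((\{0,1\}^b)^N,\mathcal{Y})$ does not contain the all-$1$ string.
   Context: The Inner-Product function $\mathrm{IP}_b:\{0,1\}^b\times\{0,1\}^b\to\{0,1\}$ is $\mathrm{IP}_b(x,y)=\sum_j x_jy_j \bmod 2$. For $\mathcal{A},\mathcal{B}\subseteq(\{0,1\}^b)^N$ and $J\subseteq[N]$, $\mathrm{IP}_b^J(\mathcal{A},\mathcal{B})\subseteq\{0,1\}^J$ is the set of vectors $(\mathrm{IP}_b(x_i,y_i))_{i\in J}$ with $x\in\mathcal{A}$, $y\in\mathcal{B}$. A set is identified with the uniform distribution on it. The entropy deficiency of a set $\mathcal{Y}\subseteq(\{0,1\}^b)^N$ is $bN-\log_2|\mathcal{Y}|$. The min-entropy rate of a distribution $\mathcal{D}$ on $U^N$ is the largest $\tau$ such that for every $J\subseteq[N]$ and $\alpha_J\in U^J$, $\Pr_{x\sim\mathcal{D}}[x_J=\alpha_J]\le|U|^{-\tau|J|}$ (here $|U|=2^b$). *)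

From mathcomp Require Import all_boot.
From Stdlib Require Import Reals.
Set Implicit Arguments.
Unset Strict Implicit.
Unset Printing Implicit Defensive.

Definition blk (b : nat) := {ffun 'I_b -> bool}.
Definition word (N b : nat) := {ffun 'I_N -> blk b}.

Definition IP (b : nat) (x y : blk b) : bool :=
  odd (\sum_(j < b) ((x j && y j) : nat)).

(* IP_b^J(A,B) subset of {0,1}^J.  A string in {0,1}^J is encoded as a
   function 'I_N -> bool that is false outside J. *)
Definition IPJ (N b : nat) (J : {set 'I_N}) (A B : {set word N b})
  : {set {ffun 'I_N -> bool}} :=
  [set [ffun i => (i \in J) && IP (x i) (y i)] | x : word N b in A, y : word N b in B].

Definition ones (N : nat) (J : {set 'I_N}) : {ffun 'I_N -> bool} :=
  [ffun i => i \in J].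

Local Open Scope R_scope.

Definition log2 (x : R) : R := ln x / ln 2.

Definition entropy_deficiency (N b : nat) (Y : {set word N b}) : R :=
  INR (b * N) - log2 (INR #|Y|).

Definition prob_restr (N b : nat) (Y : {set word N b}) (J : {set 'I_N})
  (alpha : word N b) : R :=
  INR #|[set x in Y | [forall j in J, x j == alpha j]]| / INR #|Y|.

Definition min_entropy_cond (N b : nat) (Y : {set word N b}) (tau : R) : Prop :=
  forall (J : {set 'I_N}) (alpha : word N b),
    prob_restr Y J alpha <= Rpower 2 (- (INR b * tau * INR #|J|)).

(* tau is the min-entropy rate of Y: the largest tau satisfying the condition
   (note |U| = 2^b). *)
Definition is_min_entropy_rate (N b : nat) (Y : {set word N b}) (tau : R) : Prop :=
  min_entropy_cond Y tau /\ forall tau', min_entropy_cond Y tau' -> tau' <= tau.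

(* Let Y be the set of words with at least k zero blocks, where k is the least
   integer above (K - 1) Delta.  A zero block has inner product 0 with every
   block, and deleting fewer than k coordinates leaves a zero block, so the
   all-ones string is never produced.  The number of zero blocks of a uniform
   word is binomial with parameters N and 2^-b, of mean N 2^-b >= K Delta >= k;
   comparing the binomial weights at k - 1 - t and k + t shows that more than
   half of all words lie in Y.  Hence the deficiency r of Y is below 1 <= Delta,
   and since fixing a nonempty set J of blocks has probability at most
   2^(b (N - |J|)) / |Y| = 2^(r - b |J|), the min-entropy rate of Y is at least
   1 - r / b > 1 - 1 / b. *)

From Stdlib Require Import Reals Lra.
(* Imported after Stdlib so that [_ ^ _] on nat denotes [expn]. *)
From mathcomp Require Import all_boot zify.

Set Implicit Arguments.
Unset Strict Implicit.
Unset Printing Implicit Defensive.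

Lemma sum_lt_mirror (c : nat -> nat) k n : 0 < k -> k + k <= n ->
  (forall i t, i + t.+1 = k -> c i < c (k + t)) ->
  \sum_(0 <= j < k) c j < \sum_(k <= j < n) c j.
Proof.
move=> k_gt0 kk_le_n mirror.
rewrite (big_cat_nat (leq_addr k k) kk_le_n) /=.
apply: leq_trans (leq_addr _ _).
have -> : \sum_(k <= j < k + k) c j = \sum_(0 <= t < k) c (k + t).
  by rewrite -{1}[k]add0n big_addn addnK; apply: eq_bigr => t _; rewrite addnC.
rewrite big_nat_rev add0n.
case: k k_gt0 mirror {kk_le_n} => // k _ mirror.
rewrite !big_nat_recl //= -addSn.
apply: leq_add; first by apply: mirror; lia.
rewrite big_nat_cond [X in _ <= X]big_nat_cond.
apply: leq_sum => t /andP[/andP[_ t_lt_k] _].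
by apply: ltnW; apply: mirror; lia.
Qed.

Lemma binom_mirror_factor_le N M k i t : 0 < M -> k * M.+1 <= N -> i + t.+2 = k ->
  i.+1 * (k + t).+1 * M ^ 2 <= (N - i) * (N - (k + t)).
Proof.
move=> M_gt0 kM_le_N def_k.
have -> : i.+1 * (k + t).+1 * M ^ 2 = (k * M) ^ 2 - (t.+1 * M) ^ 2.
  by rewrite subn_sqr -mulnBl -mulnDl mulnACA; congr (_ * _ * _); lia.
have -> : (N - i) * (N - (k + t)) = (N - k).+1 ^ 2 - t.+1 ^ 2.
  by rewrite subn_sqr mulnC; congr (_ * _); lia.
by apply: leq_sub; rewrite leq_sqr ?leq_pmulr //; lia.
Qed.

Lemma binom_mirror_lt N M k t i : 0 < M -> k * M.+1 <= N -> i + t.+1 = k ->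
  'C(N, i) * M ^ t.*2.+1 < 'C(N, k + t).
Proof.
move=> M_gt0 kM_le_N; elim: t i => [|t IH] i def_k.
  rewrite -def_k addn1 mulnS in kM_le_N.
  rewrite addn0 -def_k addn1 -(ltn_pmul2l (ltn0Sn i)) mul_bin_left mulnCA.
  by rewrite [_ * 'C(N, i)]mulnC ltn_mul2l bin_gt0 expn1; apply/andP; split; lia.
have i_lt_N : i < N by nia.
have pos : 0 < (N - i) * (k + t).+1 by rewrite muln_gt0 subn_gt0 i_lt_N.
rewrite -(ltn_pmul2l pos) addnS -[X in _ < X]mulnA mul_bin_left [X in _ < X]mulnA.
apply: (@leq_trans (i.+1 * (k + t).+1 * M ^ 2 * 'C(N, k + t))); last first.
  by rewrite leq_mul2r binom_mirror_factor_le ?orbT.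
have -> : (N - i) * (k + t).+1 * ('C(N, i) * M ^ t.+1.*2.+1)
    = i.+1 * (k + t).+1 * M ^ 2 * ('C(N, i.+1) * M ^ t.*2.+1).
  by rewrite mulnACA -mul_bin_left doubleS !expnS; lia.
by rewrite ltn_mul2l IH ?andbT ?muln_gt0 ?expn_gt0 ?M_gt0 //; rewrite -def_k; lia.
Qed.

Lemma binom_weight_median N M k : 0 < M -> 0 < k -> k * M.+1 <= N ->
  \sum_(0 <= j < k) 'C(N, j) * M ^ (N - j) < \sum_(k <= j < N.+1) 'C(N, j) * M ^ (N - j).
Proof.
move=> M_gt0 k_gt0 kM_le_N.
have kk_le_N : k + k <= N by apply: leq_trans kM_le_N; rewrite mulnS leq_add2l leq_pmulr.
apply: sum_lt_mirror => [//||i t def_k]; first exact: leqW.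
have -> : N - i = t.*2.+1 + (N - (k + t)) by lia.
by rewrite expnD mulnA ltn_mul2r expn_gt0 M_gt0 (binom_mirror_lt M_gt0 kM_le_N def_k).
Qed.

Lemma card_family_pinned (T : finType) n (S : {set 'I_n}) (F : 'I_n -> pred T) c :
  (forall i, i \in S -> #|F i| = 1) -> (forall i, i \notin S -> #|F i| = c) ->
  #|family F| = c ^ (n - #|S|).
Proof.
move=> F_in F_out.
rewrite card_family foldrE big_map big_enum /= (bigID (mem S)) /= big1 ?mul1n //.
rewrite (eq_bigr (fun=> c)) // prod_nat_const.
have -> : n - #|S| = #|~: S| by rewrite [#|~: S|]cardsCs setCK card_ord.
by congr (_ ^ _); apply: eq_card => i; rewrite inE.
Qed.

Lemma card_level_lt (T : finType) (f : T -> nat) n :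
  #|[set x | f x < n]| = \sum_(0 <= j < n) #|[set x | f x == j]|.
Proof.
elim: n => [|n IH].
  by rewrite big_geq //; apply/eqP; rewrite cards_eq0; apply/eqP/setP => x; rewrite !inE.
rewrite big_nat_recr //= -IH -cardsUI.
have -> : [set x | f x < n] :&: [set x | f x == n] = set0.
  by apply/setP => x; rewrite !inE; case: ltngtP.
by rewrite cards0 addn0; apply: eq_card => x; rewrite !inE ltnS leq_eqVlt orbC.
Qed.

Lemma card_level_ge (T : finType) (f : T -> nat) n B : n <= B -> (forall x, f x < B) ->
  #|[set x | n <= f x]| = \sum_(n <= j < B) #|[set x | f x == j]|.
Proof.
move=> n_le_B f_lt_B; have := cardsC [set x | n <= f x]; rewrite -cardsT.
have -> : ~: [set x | n <= f x] = [set x | f x < n].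
  by apply/setP => x; rewrite !inE -ltnNge.
have -> : [set: T] = [set x | f x < B] by apply/setP => x; rewrite !inE f_lt_B.
rewrite !card_level_lt (big_cat_nat (leq0n n) n_le_B) /=.
by move/eqP; rewrite addnC eqn_add2l => /eqP.
Qed.

Section Words.
Variables N b : nat.

Definition zero_blk : blk b := [ffun=> false].

Definition zero_blocks (y : word N b) : {set 'I_N} := [set i | y i == zero_blk].

Lemma IP_zero_blk (x : blk b) : IP x zero_blk = false.
Proof. by rewrite /IP big1 // => j _; rewrite ffunE andbF. Qed.

Lemma card_blk : #|{: blk b}| = 2 ^ b.
Proof. by rewrite card_ffun card_bool card_ord. Qed.

Lemma card_word : #|{: word N b}| = 2 ^ (b * N).
Proof. by rewrite card_ffun card_blk card_ord expnM. Qed.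

Lemma card_agree_on (J : {set 'I_N}) (al : word N b) :
  #|[set x : word N b | [forall j in J, x j == al j]]| = 2 ^ (b * (N - #|J|)).
Proof.
pose F i := if i \in J then pred1 (al i) else predT.
rewrite expnM -(@card_family_pinned _ _ J F) => [|i|i]; rewrite /F.
- apply: eq_card => x; rewrite inE; apply/forall_inP/familyP => x_al i.
    by case: ifP => [/x_al|_]; rewrite inE.
  by move=> iJ; have := x_al i; rewrite iJ inE.
- by move=> ->; rewrite -(card1 (al i)); apply: eq_card.
- by move/negbTE => ->; rewrite -card_blk; exact: eq_card.
Qed.

Lemma card_agree_on_le (Y : {set word N b}) (J : {set 'I_N}) (al : word N b) :
  #|[set x in Y | [forall j in J, x j == al j]]| <= 2 ^ (b * (N - #|J|)).
Proof.
rewrite -(card_agree_on J al); apply: subset_leq_card.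
by apply/subsetP => x; rewrite !inE => /andP[].
Qed.

Lemma card_zero_blocks_eq (S : {set 'I_N}) :
  #|[set y : word N b | zero_blocks y == S]| = (2 ^ b).-1 ^ (N - #|S|).
Proof.
pose F i := if i \in S then pred1 zero_blk else predC1 zero_blk.
rewrite -(@card_family_pinned _ _ S F) => [|i|i]; rewrite /F.
- apply: eq_card => y; rewrite inE; apply/eqP/familyP => [zb_S i|y_S].
    by rewrite -zb_S inE; case: eqP => [->|/eqP ?]; rewrite inE.
  apply/setP => i; rewrite inE; have := y_S i.
  by case: (i \in S); rewrite inE; [move=> -> | move/negbTE].
- by move=> ->; rewrite -(card1 zero_blk); apply: eq_card.
- by move/negbTE => ->; rewrite cardC1 card_blk.
Qed.

Lemma card_num_zero_blocks j :
  #|[set y : word N b | #|zero_blocks y| == j]| = 'C(N, j) * (2 ^ b).-1 ^ (N - j).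
Proof.
rewrite -sum1_card (partition_big zero_blocks (fun S => #|S| == j)) /=; last first.
  by move=> y; rewrite inE.
rewrite (eq_bigr (fun=> (2 ^ b).-1 ^ (N - j))) => [|S /eqP S_j]; last first.
  rewrite -S_j -card_zero_blocks_eq -sum1_card; apply: eq_bigl => y.
  by rewrite !inE andb_idl // => /eqP ->.
by rewrite sum_nat_const -cardsE card_draws card_ord.
Qed.

Lemma card_many_zero_blocks k : 0 < b -> 0 < k -> 2 ^ b * k <= N ->
  2 ^ (b * N) < 2 * #|[set y : word N b | k <= #|zero_blocks y|]|.
Proof.
move=> b_gt0 k_gt0 kb_le_N.
have pow_pred_gt0 : 0 < (2 ^ b).-1 by rewrite -subn1 subn_gt0 -[1](expn0 2) ltn_exp2l.
have kM_le_N : k * (2 ^ b).-1.+1 <= N by rewrite prednK ?expn_gt0 // mulnC.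
have few_lt_many : #|[set y : word N b | #|zero_blocks y| < k]|
                   < #|[set y : word N b | k <= #|zero_blocks y|]|.
  rewrite card_level_lt (@card_level_ge _ _ _ N.+1); last 2 first.
  - by apply: leq_trans (leqnSn N); apply: leq_trans kM_le_N; rewrite leq_pmulr.
  - by move=> y; rewrite ltnS -[X in _ <= X](card_ord N) max_card.
  rewrite !(eq_bigr _ (fun j _ => card_num_zero_blocks j)).
  exact: binom_weight_median.
have := cardsC [set y : word N b | k <= #|zero_blocks y|]; rewrite card_word.
have -> : ~: [set y : word N b | k <= #|zero_blocks y|] = [set y | #|zero_blocks y| < k].
  by apply/setP => y; rewrite !inE -ltnNge.
by move=> <-; rewrite mul2n -addnn ltn_add2l.
Qed.

Lemma ones_notin_IPJ k (I : {set 'I_N}) : #|I| < k ->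
  ones (~: I) \notin IPJ (~: I) [set: word N b] [set y | k <= #|zero_blocks y|].
Proof.
move=> I_lt_k; apply/imset2P => -[x y _]; rewrite inE => k_le /ffunP ones_eq.
have /subsetPn[i] : ~~ (zero_blocks y \subset I).
  by apply: contraTN k_le => /subset_leq_card zb_le; rewrite -ltnNge (leq_ltn_trans zb_le).
rewrite inE => /eqP y_i i_I; have := ones_eq i.
by rewrite !ffunE inE i_I y_i IP_zero_blk.
Qed.

End Words.

Local Open Scope R_scope.

Lemma Rpower2_le x y : Rpower 2 x <= Rpower 2 y <-> x <= y.
Proof.
split=> [le_xy | /Rle_Rpower]; last by apply; lra.
by apply: Rnot_lt_le => /(Rpower_lt 2) lt_yx; have := lt_yx ltac:(lra); lra.
Qed.

Lemma Rpower2_lt x y : Rpower 2 x < Rpower 2 y <-> x < y.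
Proof.
split=> [lt_xy | /(Rpower_lt 2)]; last by apply; lra.
by apply: Rnot_le_lt => /(Rle_Rpower 2) le_yx; have := le_yx ltac:(lra); lra.
Qed.

Lemma Rpower2_log2 x : 0 < x -> Rpower 2 (log2 x) = x.
Proof. by apply: Rpower_Rlog; lra. Qed.

Lemma INR_expn2 n : INR (2 ^ n) = Rpower 2 (INR n).
Proof.
rewrite Rpower_pow; last lra.
by elim: n => [|n IH] //=; rewrite expnS mulnE mult_INR IH.
Qed.

Lemma Rpower2_ge_iff p c t : 0 < p -> 0 < c ->
  p <= Rpower 2 (- (c * t)) <-> t <= - log2 p / c.
Proof.
move=> p_gt0 c_gt0; rewrite -{1}(Rpower2_log2 p_gt0) Rpower2_le.
set q := - log2 p / c; have -> : log2 p = - (c * q) by rewrite /q; field; lra.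
by split=> ?; nra.
Qed.

Lemma lub_Rpower2_ge (E : R -> Prop) s p c : is_lub E s -> 0 < p -> 0 < c ->
  (forall t, E t -> p <= Rpower 2 (- (c * t))) -> p <= Rpower 2 (- (c * s)).
Proof.
move=> [_ s_least] p_gt0 c_gt0 E_bound; apply/Rpower2_ge_iff => //.
by apply: s_least => t /E_bound /Rpower2_ge_iff; apply.
Qed.

Lemma exists_nat_between r : 0 <= r -> exists k : nat, r < INR k <= r + 1.
Proof.
move=> r_ge0; have [up_gt up_le] := archimed r.
exists (Z.to_nat (up r)); rewrite INR_IZR_INZ Znat.Z2Nat.id; first lra.
by apply: le_IZR; lra.
Qed.

Section MinEntropy.
Variables (N b : nat) (Y : {set word N b}).
Hypotheses (b_gt0 : (0 < b)%N) (Y_neq0 : Y != set0).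

Let cardY_gt0 : 0 < INR #|Y|.
Proof. by apply: lt_0_INR; apply/ltP; rewrite card_gt0. Qed.

Let prob_restr_le (J : {set 'I_N}) (al : word N b) (n : nat) :
  (#|[set x in Y | [forall j in J, x j == al j]]| <= n)%N ->
  prob_restr Y J al <= INR n / INR #|Y|.
Proof.
move=> /leP /le_INR cnt_le; rewrite /prob_restr /Rdiv.
by apply: Rmult_le_compat_r => //; left; apply: Rinv_0_lt_compat.
Qed.

Lemma entropy_deficiency_ge0 : 0 <= entropy_deficiency Y.
Proof.
have : INR #|Y| <= INR (2 ^ (b * N)).
  by apply: le_INR; apply/leP; rewrite -card_word max_card.
rewrite -{1}(Rpower2_log2 cardY_gt0) INR_expn2 Rpower2_le.
rewrite /entropy_deficiency; lra.
Qed.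

Lemma entropy_deficiency_lt1 :
  (2 ^ (b * N) < 2 * #|Y|)%N -> entropy_deficiency Y < 1.
Proof.
move=> /ltP /lt_INR; rewrite INR_expn2 (mult_INR 2 #|Y|) -(Rpower2_log2 cardY_gt0).
rewrite (_ : INR 2 * _ = Rpower 2 (1 + log2 (INR #|Y|))); last first.
  by rewrite Rpower_plus Rpower_1 //=; lra.
rewrite Rpower2_lt /entropy_deficiency; lra.
Qed.

Lemma min_entropy_cond_deficiency :
  min_entropy_cond Y (1 - entropy_deficiency Y / INR b).
Proof.
move=> J al; set r := entropy_deficiency Y.
have bR_gt0 : 0 < INR b by apply: lt_0_INR; apply/ltP.
have -> : INR b * (1 - r / INR b) * INR #|J| = (INR b - r) * INR #|J| by field; lra.
case: (posnP #|J|) => [-> | J_gt0].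
  rewrite Rmult_0_r Ropp_0 Rpower_O; last lra.
  apply: Rle_trans (prob_restr_le (n := #|Y|) _) _.
    by apply: subset_leq_card; apply/subsetP => x; rewrite inE => /andP[].
  by rewrite /Rdiv Rinv_r; [lra | apply: Rgt_not_eq].
apply: Rle_trans (prob_restr_le (card_agree_on_le Y J al)) _.
rewrite INR_expn2 -(Rpower2_log2 cardY_gt0) /Rdiv -Rpower_Ropp -Rpower_plus Rpower2_le.
have J_le_N : (#|J| <= N)%N by rewrite -[X in (_ <= X)%N](card_ord N) max_card.
have J_ge1 : 1 <= INR #|J| by apply: (le_INR 1); apply/leP.
have r_le : r <= r * INR #|J| by have r_ge0 : 0 <= r := entropy_deficiency_ge0; nra.
move: r_le; rewrite /r /entropy_deficiency !mulnE !mult_INR minus_INR; [lra | exact/leP].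
Qed.

Lemma exists_min_entropy_rate tau0 : (0 < N)%N -> min_entropy_cond Y tau0 ->
  exists tau, is_min_entropy_rate Y tau /\ tau0 <= tau.
Proof.
move=> N_gt0 tau0_cond.
have bR_gt0 : 0 < INR b by apply: lt_0_INR; apply/ltP.
have /set0Pn[y0 y0_Y] := Y_neq0; pose i0 : 'I_N := Ordinal N_gt0.
have p0_gt0 : 0 < prob_restr Y [set i0] y0.
  apply: Rdiv_lt_0_compat => //; apply: lt_0_INR; apply/ltP; rewrite card_gt0.
  by apply/set0Pn; exists y0; rewrite !inE y0_Y; apply/forall_inP.
have cond_bounded : bound (min_entropy_cond Y).
  exists (- log2 (prob_restr Y [set i0] y0) / INR b) => t /(_ [set i0] y0).
  by rewrite cards1 Rmult_1_r => /Rpower2_ge_iff; apply.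
have [s s_lub] := completeness _ cond_bounded (ex_intro _ tau0 tau0_cond).
have s_cond : min_entropy_cond Y s.
  move=> J al; have [p_le0 | p_gt0] := Rle_lt_dec (prob_restr Y J al) 0.
    by apply: Rle_trans p_le0 _; left; apply: exp_pos.
  case: (posnP #|J|) => [J0 | J_gt0].
    by have := tau0_cond J al; rewrite J0 !Rmult_0_r.
  have c_gt0 : 0 < INR b * INR #|J| by apply: Rmult_lt_0_compat => //; apply: lt_0_INR; apply/ltP.
  rewrite (_ : INR b * s * _ = INR b * INR #|J| * s); last ring.
  apply: (lub_Rpower2_ge s_lub) => // t t_cond.
  by rewrite (_ : INR b * _ * t = INR b * t * INR #|J|); [exact: t_cond | ring].
have [s_ub _] := s_lub.
by exists s; split; [split=> // t /s_ub | exact: s_ub].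
Qed.

End MinEntropy.

Lemma expn2_mul_le (N b k : nat) x : (0 < N)%N -> 0 < x ->
  INR b <= log2 (INR N / x) -> INR k <= x -> (2 ^ b * k <= N)%N.
Proof.
move=> N_gt0 x_gt0 b_le k_le.
have Nx_gt0 : 0 < INR N / x by apply: Rdiv_lt_0_compat => //; apply: lt_0_INR; apply/ltP.
have pow_le : INR (2 ^ b) <= INR N / x by rewrite INR_expn2 -(Rpower2_log2 Nx_gt0) Rpower2_le.
apply/leP/INR_le; rewrite (mult_INR (2 ^ b) k).
apply: (Rle_trans _ (INR N / x * x)); last by right; field; lra.
by apply: Rmult_le_compat => //; apply: pos_INR.
Qed.

Theorem theorem4 (N b : nat) (Delta K : R) :
  (1 <= N)%N -> (1 <= b)%N -> (1 <= Delta)%R -> (1 <= K)%R ->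
  (INR b <= log2 (INR N / (K * Delta)))%R ->
  exists Y : {set word N b},
    Y != set0 /\
    (entropy_deficiency Y <= Delta)%R /\
    (exists tau : R, is_min_entropy_rate Y tau /\ (1 - 1 / INR b < tau)%R) /\
    (forall I : {set 'I_N},
       (INR #|I| <= (K - 1) * Delta)%R ->
       ones (~: I) \notin IPJ (~: I) [set: word N b] Y).
Proof.
move=> N_gt0 b_gt0 Delta_ge1 K_ge1 b_le.
have [k [k_gt k_le]] := @exists_nat_between ((K - 1) * Delta) ltac:(nra).
have k_gt0 : (0 < k)%N by apply/ltP/(INR_lt 0); rewrite /=; nra.
have kb_le_N : (2 ^ b * k <= N)%N by apply: (expn2_mul_le N_gt0 _ b_le); nra.
set Y := [set y : word N b | (k <= #|zero_blocks y|)%N].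
have Y_big : (2 ^ (b * N) < 2 * #|Y|)%N := card_many_zero_blocks b_gt0 k_gt0 kb_le_N.
have Y_neq0 : Y != set0 by apply: contraTneq Y_big => ->; rewrite cards0 muln0.
have r_lt1 := entropy_deficiency_lt1 Y_neq0 Y_big.
have [tau [tau_rate tau_ge]] :=
  exists_min_entropy_rate b_gt0 Y_neq0 N_gt0 (min_entropy_cond_deficiency b_gt0 Y_neq0).
exists Y; split=> //; split; first lra.
split; last by move=> I I_le; apply: ones_notin_IPJ; apply/ltP/INR_lt; lra.
exists tau; split=> //; apply: Rlt_le_trans tau_ge.
have bR_gt0 : 0 < INR b by apply: lt_0_INR; apply/ltP.
have : entropy_deficiency Y / INR b < 1 / INR b.
  by apply: Rmult_lt_compat_r => //; apply: Rinv_0_lt_compat.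
lra.
Qed.
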